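(* Let $n\in\mathbb{N}$, $0<\beta\le n$, $b\in\operatorname{BMO}^\beta(\mathbb{R}^n)$ and $k>0$. Define $b_k(x)=k$ if $b(x)>k$, $b_k(x)=b(x)$ if $-k\le b(x)\le k$, and $b_k(x)=-k$ if $b(x)<-k$. Then there exists a constant $C_\beta>0$, depending only on $\beta$, such that $\|b_k\|_{\operatorname{BMO}^\beta(\mathbb{R}^n)}\le C_\beta\|b\|_{\operatorname{BMO}^\beta(\mathbb{R}^n)}$.
   Context: $\mathcal{H}^\beta_\infty(E)=\inf\{\sum_i\omega_\beta r_i^\beta:E\subset\bigcup_iB(x_i,r_i)\}$, $\omega_\beta=\pi^{\beta/2}/\Gamma(\beta/2+1)$; integrals against $\mathcal{H}^\beta_\infty$ are Choquet integrals $\int_\Omega h\,d\mathcal{H}^\beta_\infty=\int_0^\infty\mathcal{H}^\beta_\infty(\{x\in\Omega:h>t\})\,dt$. Cubes are axis-parallel with side length $\ell(Q)$. $\|f\|_{\operatorname{BMO}^\beta(\mathbb{R}^n)}=\sup_Q\inf_{c\in\mathbb{R}}\ell(Q)^{-\beta}\int_Q|f-c|\,d\mathcal{H}^\beta_\infty$, and $\operatorname{BMO}^\beta(\mathbb{R}^n)$ is the space of functions with finite such quantity. *)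

From HB Require Import structures.
From mathcomp Require Import all_boot all_order all_algebra.
From mathcomp Require Import all_classical all_reals all_analysis.
Set Implicit Arguments. Unset Strict Implicit. Unset Printing Implicit Defensive.
Import Order.TTheory GRing.Theory Num.Theory.
Import numFieldNormedType.Exports.
Local Open Scope classical_set_scope.
Local Open Scope ring_scope.

Section BMOdefs.
Variable R : realType.

Definition Gamma (s : R) : R :=
  fine (\int[@lebesgue_measure R]_(t in `]0%R, +oo[%classic)
          ((t `^ (s - 1)) * expR (- t))%:E)%E.

Definition omega (beta : R) : R := (pi `^ (beta / 2)) / Gamma (beta / 2 + 1).

Definition enorm (n : nat) (x : 'rV[R]_n) : R := Num.sqrt (\sum_(i < n) x 0 i ^+ 2).

Definition eball (n : nat) (x : 'rV[R]_n) (r : R) : set 'rV[R]_n :=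
  [set y | enorm (y - x) < r].

Definition hcontent (n : nat) (beta : R) (E : set 'rV[R]_n) : \bar R :=
  ereal_inf [set s : \bar R | exists (x : nat -> 'rV[R]_n) (r : nat -> R),
    [/\ (forall i, 0 <= r i), E `<=` \bigcup_i eball (x i) (r i) &
        s = (\sum_(0 <= i <oo) (omega beta * r i `^ beta)%:E)%E]].

Definition choquet (n : nat) (beta : R) (A : set 'rV[R]_n) (h : 'rV[R]_n -> R) : \bar R :=
  (\int[@lebesgue_measure R]_(t in `[0%R, +oo[%classic)
      hcontent beta [set x | A x /\ (t < h x)%R])%E.

Definition cube (n : nat) (a : 'rV[R]_n) (l : R) : set 'rV[R]_n :=
  [set x | forall i : 'I_n, a 0 i <= x 0 i <= a 0 i + l].

Definition bmo_norm (n : nat) (beta : R) (f : 'rV[R]_n -> R) : \bar R :=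
  ereal_sup [set s : \bar R | exists (a : 'rV[R]_n) (l : R), 0 < l /\
    s = ereal_inf [set v : \bar R | exists c : R,
          v = ((l `^ (- beta))%:E * choquet beta (cube a l) (fun x => `|f x - c|%R))%E]].

Definition trunc (n : nat) (k : R) (b : 'rV[R]_n -> R) : 'rV[R]_n -> R :=
  fun x => if k < b x then k else if b x < - k then - k else b x.

End BMOdefs.

(** Truncation at level [k] is the composition with the 1-Lipschitz map
    [y |-> max (-k) (min k y)].  A 1-Lipschitz map [phi] satisfies
    [|phi (f x) - phi c| <= |f x - c|], and the Choquet integral with respect
    to [H^beta_oo] is monotone in the integrand, so for every cube [Q] the
    oscillation of [phi \o f] on [Q] against the constant [phi c] is at most
    that of [f] against [c].  Hence the statement holds with [C = 1]. *)
From HB Require Import structures.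
From mathcomp Require Import all_boot all_order all_algebra.
From mathcomp Require Import all_classical all_reals all_analysis.
From mathcomp Require Import lra.
Set Implicit Arguments. Unset Strict Implicit. Unset Printing Implicit Defensive.
Import Order.TTheory GRing.Theory Num.Theory.
Local Open Scope ring_scope.

Section ChoquetMonotone.
Local Open Scope classical_set_scope.
Local Open Scope ereal_scope.
Variable R : realType.

(* Unlike [ge0_le_integral], no measurability is required: the integral of a
   nonnegative function is a supremum over the simple functions below it. *)
Lemma ge0_le_integral_nonmeas d (T : measurableType d)
    (mu : {measure set T -> \bar R}) (D : set T) (f g : T -> \bar R) :
  (forall x, D x -> 0 <= f x) -> (forall x, D x -> f x <= g x) ->
  \int[mu]_(x in D) f x <= \int[mu]_(x in D) g x.
Proof.
move=> f0 fg.
have g0 x : D x -> 0 <= g x by move=> Dx; exact: le_trans (f0 x Dx) (fg x Dx).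
rewrite !(integral_mkcond D) !ge0_integralTE; [|exact: erestrict_ge0..].
apply: ge_ereal_sup => _ [h hf <-].
apply: ereal_sup_ubound; exists h => // x.
exact: le_trans (hf x) (lee_restrict fg x).
Qed.

Lemma omega_ge0 (beta : R) : (0 <= omega beta)%R.
Proof.
apply: divr_ge0; first exact: powR_ge0.
apply: fine_ge0; apply: integral_ge0 => t _.
by rewrite lee_fin mulr_ge0 ?powR_ge0 ?expR_ge0.
Qed.

Lemma hcontent_ge0 n (beta : R) (E : set 'rV[R]_n) : 0 <= hcontent beta E.
Proof.
apply: le_ereal_inf_tmp => _ [x [r [r0 _ ->]]].
apply: nneseries_ge0 => i _ _.
by rewrite lee_fin mulr_ge0 ?omega_ge0 ?powR_ge0.
Qed.

Lemma le_hcontent n (beta : R) (E F : set 'rV[R]_n) : E `<=` F ->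
  hcontent beta E <= hcontent beta F.
Proof.
move=> EF; apply: le_ereal_inf_tmp => _ [x [r [r0 Fcover ->]]].
apply: ereal_inf_lbound; exists x, r; split => //.
exact: subset_trans EF Fcover.
Qed.

Lemma le_choquet n (beta : R) (A : set 'rV[R]_n) (h1 h2 : 'rV[R]_n -> R) :
  (forall x, A x -> h1 x <= h2 x)%R ->
  choquet beta A h1 <= choquet beta A h2.
Proof.
move=> h12; apply: ge0_le_integral_nonmeas => t _; first exact: hcontent_ge0.
apply: le_hcontent => x [Ax tx]; split => //.
exact: lt_le_trans tx (h12 x Ax).
Qed.

End ChoquetMonotone.

Lemma bmo_norm_comp_lipschitz (R : realType) n (beta : R) (phi : R -> R)
    (f : 'rV[R]_n -> R) :
  (forall y c, `|phi y - phi c| <= `|y - c|) ->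
  (bmo_norm beta (phi \o f) <= bmo_norm beta f)%E.
Proof.
move=> phi_lip; apply: ge_ereal_sup => _ [a [l [l0 ->]]].
apply: le_trans (ereal_sup_ubound _); last by exists a, l.
apply: le_ereal_inf_tmp => _ [c ->].
apply: le_trans (ereal_inf_lbound _) _; first by exists (phi c).
rewrite lee_wpmul2l ?lee_fin ?powR_ge0 //.
by apply: le_choquet => x _; exact: phi_lip.
Qed.

Definition clamp (R : realType) (k y : R) : R :=
  if k < y then k else if y < - k then - k else y.

Lemma trunc_clamp (R : realType) n (k : R) (b : 'rV[R]_n -> R) :
  trunc k b = clamp k \o b.
Proof. by []. Qed.

Lemma clamp_lipschitz (R : realType) (k y c : R) : 0 <= k ->
  `|clamp k y - clamp k c| <= `|y - c|.
Proof.
move=> k_ge0; have yc := ler_norm (y - c); have cy := ler_norm (c - y).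
rewrite distrC in cy; rewrite /clamp ler_norml.
by case: (ltrP k y) => ?; case: (ltrP y (- k)) => ?;
  case: (ltrP k c) => ?; case: (ltrP c (- k)) => ?; apply/andP; split; lra.
Qed.

Theorem lemma2p11 (R : realType) (beta : R) (hbeta : 0 < beta) :
  exists C : R, 0 < C /\
    forall (n : nat) (b : 'rV[R]_n -> R) (k : R),
      beta <= n%:R ->
      (bmo_norm beta b < +oo)%E ->
      0 < k ->
      (bmo_norm beta (trunc k b) <= C%:E * bmo_norm beta b)%E.
Proof.
exists 1; split => // n b k _ _ k_gt0.
rewrite mul1e trunc_clamp.
apply: bmo_norm_comp_lipschitz => y c.
exact: clamp_lipschitz (ltW k_gt0).
Qed.
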